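(* The lattice width of a Delzant polytope $\Delta\subseteq\mathbb{R}^d$ coincides with its facet width.
   Context: A Delzant polytope is a full-dimensional polytope $\Delta\subseteq\mathbb{R}^d$ whose normal fan consists of unimodular cones, i.e. at each vertex the primitive inner normals of the incident facets form a basis of $(\mathbb{Z}^d)^*$. For $u\ne0$, $\mathrm{width}_u(\Delta)=\max_{x,y\in\Delta}|u(x)-u(y)|$. The lattice width is $\min_{u\in(\mathbb{Z}^d)^*\setminus\{0\}}\mathrm{width}_u(\Delta)$; the facet width is the minimum of $\mathrm{width}_u(\Delta)$ over the primitive facet normals $u\in(\mathbb{Z}^d)^*$ of $\Delta$. *)

From HB Require Import structures.
From mathcomp Require Import all_boot all_order all_algebra.
Set Implicit Arguments. Unset Strict Implicit. Unset Printing Implicit Defensive.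
Import Order.TTheory GRing.Theory Num.Theory.
Local Open Scope ring_scope.

Section Delzant.
Variables (R : realFieldType) (d : nat).

Definition pairing (u x : 'rV[R]_d) : R := \sum_(i < d) u 0 i * x 0 i.

Definition intfun (u : 'rV[int]_d) : 'rV[R]_d := map_mx (fun z : int => z%:~R) u.

Definition conv (V : seq 'rV[R]_d) (x : 'rV[R]_d) : Prop :=
  exists lam : 'I_(size V) -> R,
    [/\ forall i, 0 <= lam i, \sum_i lam i = 1 & x = \sum_i lam i *: V`_i].

(* F contains k+1 affinely independent points, i.e. dim aff(F) >= k *)
Definition aff_dim_ge (F : 'rV[R]_d -> Prop) (k : nat) : Prop :=
  exists (x0 : 'rV[R]_d) (X : 'M[R]_(k, d)),
    [/\ row_free X, F x0 & forall i, F (x0 + row i X)].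

Definition full_dimensional (P : 'rV[R]_d -> Prop) : Prop := aff_dim_ge P d.

Definition face (P : 'rV[R]_d -> Prop) (u : 'rV[R]_d) (x : 'rV[R]_d) : Prop :=
  P x /\ forall y, P y -> pairing u x <= pairing u y.

Definition is_facet (P F : 'rV[R]_d -> Prop) : Prop :=
  exists u : 'rV[R]_d, u != 0 /\ (forall x, F x <-> face P u x) /\ aff_dim_ge F d.-1.

Definition is_vertex (P : 'rV[R]_d -> Prop) (v : 'rV[R]_d) : Prop :=
  exists u : 'rV[R]_d, forall x, face P u x <-> x = v.

Definition primitive (u : 'rV[int]_d) : Prop :=
  u != 0 /\ forall (k : int) (w : 'rV[int]_d), u = k *: w -> `|k| = 1.

Definition facet_normal (P : 'rV[R]_d -> Prop) (u : 'rV[int]_d) : Prop :=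
  primitive u /\ is_facet P (face P (intfun u)).

(* Delzant polytope: full-dimensional, every facet has a primitive integer
   inner normal, and at every vertex the primitive inner normals of the
   facets through that vertex form a basis of Z^d (they are exactly the rows
   of a unimodular integer matrix). *)
Definition delzant (P : 'rV[R]_d -> Prop) : Prop :=
  [/\ full_dimensional P,
      (forall F, is_facet P F ->
         exists u, primitive u /\ forall x, F x <-> face P (intfun u) x)
    & forall v, is_vertex P v ->
        exists M : 'M[int]_d, M \in unitmx /\
          forall u, (facet_normal P u /\ face P (intfun u) v) <->
                    exists i, u = row i M].

Definition is_width (P : 'rV[R]_d -> Prop) (u : 'rV[R]_d) (w : R) : Prop :=
  (exists x y, [/\ P x, P y & `|pairing u x - pairing u y| = w]) /\
  (forall x y, P x -> P y -> `|pairing u x - pairing u y| <= w).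

Definition is_lattice_width (P : 'rV[R]_d -> Prop) (w : R) : Prop :=
  (exists u : 'rV[int]_d, u != 0 /\ is_width P (intfun u) w) /\
  (forall (u : 'rV[int]_d) w', u != 0 -> is_width P (intfun u) w' -> w <= w').

Definition is_facet_width (P : 'rV[R]_d -> Prop) (w : R) : Prop :=
  (exists u : 'rV[int]_d, facet_normal P u /\ is_width P (intfun u) w) /\
  (forall (u : 'rV[int]_d) w', facet_normal P u -> is_width P (intfun u) w' -> w <= w').

End Delzant.

From HB Require Import structures.
From mathcomp Require Import all_boot all_order all_algebra.
From mathcomp.algebra_tactics Require Import ring lra.
From mathcomp Require Import zify.
From Stdlib Require Import Classical.
Set Implicit Arguments. Unset Strict Implicit. Unset Printing Implicit Defensive.
Import Order.TTheory GRing.Theory Num.Theory.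
Local Open Scope ring_scope.

(* Let u be a nonzero integer functional and v a vertex of P at which u is
   minimal. The primitive normals n_1, ..., n_d of the facets through v form a
   basis of Z^d, so u = sum b_i n_i with integers b_i; since u is minimal at v,
   it lies in the normal cone at v (Farkas), hence all b_i >= 0 and some
   b_j >= 1. For x in P this gives 0 <= n_j(x - v) <= u(x - v), so
   width_{n_j}(P) <= width_u(P). As P has finitely many facets, the facet width
   is attained, and it is therefore the lattice width. *)

Section Pairing.
Variables (R : realFieldType) (d : nat).
Implicit Types (u x y : 'rV[R]_d).

Lemma pairingC u x : pairing u x = pairing x u.
Proof. by apply: eq_bigr => i _; rewrite mulrC. Qed.

Lemma pairingDr u x y : pairing u (x + y) = pairing u x + pairing u y.
Proof. by rewrite /pairing -big_split; apply: eq_bigr => i _; rewrite mxE mulrDr. Qed.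

Lemma pairingZr u a x : pairing u (a *: x) = a * pairing u x.
Proof. by rewrite /pairing mulr_sumr; apply: eq_bigr => i _; rewrite mxE mulrCA. Qed.

Lemma pairingNr u x : pairing u (- x) = - pairing u x.
Proof. by rewrite -scaleN1r pairingZr mulN1r. Qed.

Lemma pairingBr u x y : pairing u (x - y) = pairing u x - pairing u y.
Proof. by rewrite pairingDr pairingNr. Qed.

Lemma pairing0r u : pairing u 0 = 0.
Proof. by rewrite -(scale0r (0 : 'rV[R]_d)) pairingZr mul0r. Qed.

Lemma pairing_sumr u n (F : 'I_n -> 'rV[R]_d) :
  pairing u (\sum_(i < n) F i) = \sum_(i < n) pairing u (F i).
Proof.
apply: (big_ind2 (fun a b => pairing u a = b)) => //; first exact: pairing0r.
by move=> x1 y1 x2 y2 <- <-; rewrite pairingDr.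
Qed.

Lemma pairingDl u x y : pairing (x + y) u = pairing x u + pairing y u.
Proof. by rewrite !(pairingC _ u) pairingDr. Qed.

Lemma pairingZl u a x : pairing (a *: x) u = a * pairing x u.
Proof. by rewrite !(pairingC _ u) pairingZr. Qed.

Lemma pairingNl u x : pairing (- x) u = - pairing x u.
Proof. by rewrite !(pairingC _ u) pairingNr. Qed.

Lemma pairingBl u x y : pairing (x - y) u = pairing x u - pairing y u.
Proof. by rewrite !(pairingC _ u) pairingBr. Qed.

Lemma pairing0l u : pairing 0 u = 0.
Proof. by rewrite pairingC pairing0r. Qed.

Lemma pairing_self_ge0 x : 0 <= pairing x x.
Proof. by apply: sumr_ge0 => i _; rewrite -expr2 sqr_ge0. Qed.

Lemma pairing_self_eq0 x : (pairing x x == 0) = (x == 0).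
Proof.
apply/idP/eqP => [|->]; last by rewrite pairing0r.
rewrite psumr_eq0 => [/allP x0|i _]; last by rewrite -expr2 sqr_ge0.
apply/rowP => i; rewrite mxE; apply/eqP; rewrite -sqrf_eq0 expr2.
exact: x0 (mem_index_enum _).
Qed.

Lemma pairing_self_gt0 x : x != 0 -> 0 < pairing x x.
Proof. by rewrite lt_def pairing_self_ge0 pairing_self_eq0 andbT. Qed.

(* [2 (y.y - y.x) >= |x - y|^2] *)
Lemma pairing_le_self x y : pairing x x <= pairing y y ->
  pairing y x <= pairing y y /\ (pairing y x = pairing y y -> x = y).
Proof.
move=> xy.
have sqrB : pairing (x - y) (x - y) = pairing x x - 2 * pairing y x + pairing y y.
  by rewrite !pairingBl !pairingBr (pairingC x y); ring.
have := pairing_self_ge0 (x - y); rewrite sqrB => ge0.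
split=> [|eq_yx]; first lra.
apply/eqP; rewrite -subr_eq0 -pairing_self_eq0 eq_le pairing_self_ge0 sqrB andbT.
lra.
Qed.

Lemma pairing_mulmx n (a : 'rV[R]_n) (A : 'M[R]_(n, d)) x :
  pairing (a *m A) x = \sum_(i < n) a 0 i * pairing (row i A) x.
Proof.
rewrite /pairing; under eq_bigr => j _ do rewrite mxE mulr_suml.
rewrite exchange_big /=; apply: eq_bigr => i _; rewrite mulr_sumr.
by apply: eq_bigr => j _; rewrite mxE mulrA.
Qed.

Lemma pairing_row_mulmx_tr m (w : 'rV[R]_d) (B : 'M[R]_(m, d)) r :
  (w *m B^T) 0 r = pairing w (row r B).
Proof. by rewrite mxE; apply: eq_bigr => j _; rewrite !mxE. Qed.

End Pairing.

Section ConvexHull.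
Variables (R : realFieldType) (d : nat) (V : seq 'rV[R]_d).
Local Notation P := (conv V).

Lemma conv_nth (k : 'I_(size V)) : P V`_k.
Proof.
exists (fun i => (i == k)%:R); split.
- by move=> i; rewrite ler0n.
- by rewrite (bigD1 k) //= eqxx big1 ?addr0 // => i /negbTE ->.
- by rewrite (bigD1 k) //= eqxx scale1r big1 ?addr0 // => i /negbTE ->; rewrite scale0r.
Qed.

Lemma conv_nth_lt i : (i < size V)%N -> P V`_i.
Proof. by move=> lt_i; apply: (conv_nth (Ordinal lt_i)). Qed.

Lemma pairing_convex_comb u x (lam : 'I_(size V) -> R) :
  x = \sum_(i < size V) lam i *: V`_i ->
  pairing u x = \sum_(i < size V) lam i * pairing u V`_i.
Proof. by move=> ->; rewrite pairing_sumr; apply: eq_bigr => i _; rewrite pairingZr. Qed.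

Lemma conv_pairing_ge u c x : P x ->
  (forall k : 'I_(size V), c <= pairing u V`_k) -> c <= pairing u x.
Proof.
move=> [lam [lam_ge0 lam_sum1 ->]] cV; rewrite (pairing_convex_comb u (erefl _)).
have -> : c = \sum_(i < size V) lam i * c by rewrite -mulr_suml lam_sum1 mul1r.
by apply: ler_sum => i _; apply: ler_wpM2l.
Qed.

Lemma conv_pairing_le u c x : P x ->
  (forall k : 'I_(size V), pairing u V`_k <= c) -> pairing u x <= c.
Proof.
move=> Px Vc; rewrite -lerN2 -pairingNl; apply: conv_pairing_ge Px _ => k.
by rewrite pairingNl lerN2.
Qed.

Lemma conv_size_gt0 x : P x -> (0 < size V)%N.
Proof.
case: V => [|//] [lam [_ lam_sum1 _]]; move: lam_sum1; rewrite big_ord0 => /eqP.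
by rewrite eq_sym oner_eq0.
Qed.

Lemma exists_min_vertex u x : P x ->
  exists k : 'I_(size V), forall l : 'I_(size V), pairing u V`_k <= pairing u V`_l.
Proof.
move=> /conv_size_gt0 V_gt0.
by case: (arg_minP (fun k : 'I_(size V) => pairing u V`_k) (isT : predT (Ordinal V_gt0)))
  => k _ min_k; exists k => l; apply: min_k.
Qed.

Lemma exists_width u x : P x -> exists w, is_width P u w.
Proof.
move=> Px.
have [kM maxM] := exists_min_vertex (- u) Px.
have [km minm] := exists_min_vertex u Px.
have {}maxM (l : 'I_(size V)) : pairing u V`_l <= pairing u V`_kM.
  by have := maxM l; rewrite !pairingNl lerN2.
exists (pairing u V`_kM - pairing u V`_km); split.
  exists V`_kM, V`_km; split; try exact: conv_nth.
  by rewrite ger0_norm // subr_ge0.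
move=> y z Py Pz.
have := conv_pairing_ge Py minm; have := conv_pairing_le Py maxM.
have := conv_pairing_ge Pz minm; have := conv_pairing_le Pz maxM.
rewrite ler_norml; move=> *; apply/andP; split; lra.
Qed.

Lemma is_width_unique u w1 w2 : is_width P u w1 -> is_width P u w2 -> w1 = w2.
Proof.
move=> [[x1 [y1 [Px1 Py1 <-]]] le_w1] [[x2 [y2 [Px2 Py2 <-]]] le_w2].
by apply/eqP; rewrite eq_le le_w1 ?le_w2.
Qed.

End ConvexHull.

Section Vertex.
Variables (R : realFieldType) (d : nat) (V : seq 'rV[R]_d).
Local Notation P := (conv V).

Lemma is_vertex_strict_min l p : P p ->
  (forall i : 'I_(size V), pairing l p <= pairing l V`_i /\
     (pairing l V`_i = pairing l p -> V`_i = p)) ->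
  is_vertex P p.
Proof.
move=> Pp strict; exists l => z; split; last first.
  by move=> ->; split=> // x Px; apply: conv_pairing_ge Px _ => k; case: (strict k).
move=> [[lam [lam_ge0 lam_sum1 ->]] min_z].
have ge0 j : 0 <= lam j * (pairing l V`_j - pairing l p).
  by rewrite mulr_ge0 // subr_ge0; case: (strict j).
have sum_eq0 : \sum_(j < size V) lam j * (pairing l V`_j - pairing l p) = 0.
  apply/eqP; rewrite eq_le sumr_ge0 // andbT.
  under eq_bigr => j _ do rewrite mulrBr.
  rewrite sumrB -(pairing_convex_comb l (erefl _)) -mulr_suml lam_sum1 mul1r.
  by rewrite subr_le0 min_z.
have lam_eq0 := psumr_eq0P (fun j _ => ge0 j) sum_eq0.
have lamV i : lam i *: V`_i = lam i *: p.
  move/eqP: (lam_eq0 i isT); rewrite mulf_eq0 => /orP [/eqP ->|]; first by rewrite !scale0r.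
  by rewrite subr_eq0 => /eqP /(strict i).2 ->.
by under eq_bigr => i _ do rewrite lamV; rewrite -scaler_suml lam_sum1 scale1r.
Qed.

(* Among the vertices minimizing [y], take [p] of largest norm; then
   [K y - p] is minimized at [p] only, for [K] large. *)
Lemma exists_vertex_face y x : P x ->
  exists k : 'I_(size V), is_vertex P V`_k /\ face P y V`_k.
Proof.
move=> Px; have [km min_km] := exists_min_vertex y Px.
set m := pairing y V`_km.
have [kp /eqP ym max_kp] := arg_maxP (fun k : 'I_(size V) => pairing V`_k V`_k)
  (eqxx _ : (fun k : 'I_(size V) => pairing y V`_k == m) km).
set p := V`_kp in ym max_kp *.
set K := 1 + \sum_(i < size V | pairing y V`_i != m)
              `|pairing p V`_i - pairing p p| / (pairing y V`_i - m).
have lE z : pairing (K *: y - p) z = K * pairing y z - pairing p z.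
  by rewrite pairingBl pairingZl.
exists kp; split; last first.
  by split=> [|z Pz]; [exact: conv_nth | rewrite ym; apply: conv_pairing_ge Pz _].
apply: (is_vertex_strict_min (l := K *: y - p)); first exact: conv_nth.
move=> i; rewrite !lE ym; have [yi|yi] := eqVneq (pairing y V`_i) m.
  have [le_pi eq_pi] := pairing_le_self (max_kp i (introT eqP yi)).
  by rewrite yi; split=> [|E]; [lra | apply: eq_pi; lra].
have lt_m : 0 < pairing y V`_i - m by rewrite subr_gt0 lt_def yi min_km.
set t := `|pairing p V`_i - pairing p p| / (pairing y V`_i - m).
have t_le : 1 + t <= K.
  rewrite lerD2l /K (bigD1 i) //= lerDl; apply: sumr_ge0 => j _.
  by rewrite divr_ge0 // subr_ge0 min_km.
have tE : t * (pairing y V`_i - m) = `|pairing p V`_i - pairing p p|.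
  by rewrite mulfVK // gt_eqF.
have := ler_wpM2r (ltW lt_m) t_le; rewrite mulrDl mul1r tE.
have := ler_norm (pairing p V`_i - pairing p p).
move: lt_m; clearbody t K => *.
have strict : K * m - pairing p p < K * pairing y V`_i - pairing p V`_i by nra.
by split=> [|E]; [exact: ltW | move: strict; rewrite E ltxx].
Qed.

End Vertex.

Section Farkas.
Variables (R : realFieldType) (d : nat).
Implicit Types (G : seq 'rV[R]_d) (a e y : 'rV[R]_d).

Definition in_cone G e : Prop :=
  exists mu : nat -> R, (forall i, 0 <= mu i) /\ e = \sum_(i < size G) mu i *: G`_i.

Definition separates y G e : Prop :=
  (forall i, (i < size G)%N -> 0 <= pairing y G`_i) /\ pairing y e < 0.

Lemma in_cone_cons a G e t : 0 <= t -> in_cone G (e - t *: a) -> in_cone (a :: G) e.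
Proof.
move=> t_ge0 [mu [mu_ge0 E]].
exists (fun i => if i is i'.+1 then mu i' else t); split; first by case.
rewrite big_ord_recl /= -[X in _ + X]/(\sum_(i < size G) mu i *: G`_i) -E.
by rewrite addrC subrK.
Qed.

(* Projecting along [a] onto the kernel of a separator [y] of [G] with [y.a < 0]
   reduces the cone [a :: G] to a cone with one generator less. *)
Lemma in_cone_cons_proj y a G e :
  let s := pairing y a in let f g := g - (pairing y g / s) *: a in
  separates y G e -> s < 0 -> in_cone (map f G) (f e) -> in_cone (a :: G) e.
Proof.
move=> s f [yG ye] s_lt0 [mu [mu_ge0 E]].
pose c := \sum_(i < size G) mu i * (pairing y G`_i / s).
apply: (in_cone_cons (t := pairing y e / s - c)).
  rewrite subr_ge0 (@le_trans _ _ 0) //.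
    apply: sumr_le0 => i _; rewrite mulr_ge0_le0 // mulr_ge0_le0 ?yG //.
    by rewrite invr_le0 ltW.
  by rewrite ler_ndivlMr // mul0r ltW.
exists mu; split => //.
have fE : f e = \sum_(i < size G) mu i *: G`_i - c *: a.
  rewrite E size_map scaler_suml -sumrB; apply: eq_bigr => i _.
  by rewrite (nth_map 0) // /f scalerBr scalerA.
suff -> : e - (pairing y e / s - c) *: a = f e + c *: a by rewrite fE subrK.
by rewrite /f scalerBl opprB addrA addrAC.
Qed.

Lemma farkas G e : ~ in_cone G e -> exists y, separates y G e.
Proof.
elim: {G}(size G) {-2}G (erefl (size G)) e => [|n IH] G sizeG e not_cone.
  have e_neq0 : e != 0.
    apply/eqP => e0; apply: not_cone; rewrite e0.
    by exists (fun _ => 0); split=> //; rewrite big1 // => i _; rewrite scale0r.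
  exists (- e); split; first by move: sizeG => /size0nil ->.
  by rewrite pairingNl oppr_lt0 pairing_self_gt0.
case: G sizeG not_cone => [//|a G] [sizeG] not_cone.
have [y [yG ye]] : exists y, separates y G e.
  apply: (IH _ sizeG) => G_cone; apply: not_cone.
  by apply: (in_cone_cons (t := 0)); rewrite // scale0r subr0.
have [ya|ya] := lerP 0 (pairing y a).
  by exists y; split => // -[|i] //= /yG.
set s := pairing y a in ya.
pose f g := g - (pairing y g / s) *: a.
have [y' [y'G y'e]] : exists y', separates y' (map f G) (f e).
  by apply: IH; rewrite ?size_map // => /(in_cone_cons_proj (conj yG ye) ya).
have y'E g : pairing (y' - (pairing y' a / s) *: y) g = pairing y' (f g).
  by rewrite pairingBl pairingZl pairingBr pairingZr; ring.
exists (y' - (pairing y' a / s) *: y); split; last by rewrite y'E.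
case=> [|i] /= lt_i; rewrite y'E.
  by rewrite /f divff ?lt_eqF // scale1r subrr pairing0r.
by have := y'G i; rewrite size_map (nth_map 0) //; apply.
Qed.

End Farkas.

Section Orthogonal.
Variables (R : realFieldType) (d : nat).

Lemma exists_orthogonal m (B : 'M[R]_(m, d)) : (m < d)%N ->
  exists2 w : 'rV[R]_d, w != 0 & forall r, pairing w (row r B) = 0.
Proof.
move=> lt_md; have : kermx B^T != 0.
  rewrite -mxrank_eq0 mxrank_ker mxrank_tr subn_eq0 -ltnNge.
  exact: leq_ltn_trans (rank_leq_row B) lt_md.
have [/existsP [i Ki] _|] := boolP [exists i, row i (kermx B^T) != 0].
  exists (row i (kermx B^T)) => // r.
  by rewrite -pairing_row_mulmx_tr -row_mul mulmx_ker row0 mxE.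
rewrite negb_exists => /forallP K0 /negP []; apply/eqP/row_matrixP => i.
by move: (K0 i); rewrite negbK row0 => /eqP.
Qed.

Lemma row_free_col_mx k (X : 'M[R]_(k, d)) (g w : 'rV[R]_d) : row_free X ->
  (forall r, pairing w (row r X) = 0) -> pairing w g != 0 -> row_free (col_mx X g).
Proof.
move=> free_X wX wg; rewrite -kermx_eq0; apply/eqP/row_matrixP => i.
rewrite row0; set a := row i _.
have : a *m col_mx X g = 0 by rewrite -row_mul mulmx_ker row0.
rewrite -[a]hsubmxK mul_row_col => aXg.
have a2 : rsubmx a = 0.
  have := congr1 (pairing w) aXg.
  rewrite pairing0r pairingDr !(pairingC w) !pairing_mulmx big_ord1.
  rewrite big1 ?add0r => [|r _]; last by rewrite pairingC wX mulr0.
  have -> : row ord0 g = g by apply/rowP => j; rewrite mxE.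
  move/eqP; rewrite mulf_eq0 pairingC (negbTE wg) orbF => /eqP a0.
  by apply/rowP => j; rewrite (ord1 j) [RHS]mxE.
move/eqP: aXg; rewrite a2 mul0mx addr0 mulmx_free_eq0 // => /eqP ->.
by rewrite row_mx0.
Qed.

End Orthogonal.

Section Tilt.
Variables (R : realFieldType) (d : nat) (G : seq 'rV[R]_d) (e : 'rV[R]_d).
Hypothesis G_spans :
  forall w, (forall i, (i < size G)%N -> pairing w G`_i = 0) -> w = 0.

Definition tight_separator k (z : 'rV[R]_d) (X : 'M[R]_(k, d)) : Prop :=
  [/\ separates z G e, row_free X,
      forall r, exists2 i, (i < size G)%N & row r X = G`_i
    & forall r, pairing z (row r X) = 0].

Lemma exists_tilt_direction k (X : 'M[R]_(k, d)) : (k.+1 < d)%N ->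
  exists w, [/\ forall r, pairing w (row r X) = 0, pairing w e = 0
              & exists2 i, (i < size G)%N & pairing w G`_i < 0].
Proof.
rewrite -addn1 => lt_kd; have [w w_neq0 wXe] := exists_orthogonal (col_mx X e) lt_kd.
have wX r : pairing w (row r X) = 0 by rewrite -(wXe (lshift 1 r)) rowKu.
have we : pairing w e = 0.
  by rewrite -(wXe (rshift k ord0)) rowKd; congr pairing; apply/rowP => j; rewrite mxE.
have [i lt_i wi] : exists2 i, (i < size G)%N & pairing w G`_i != 0.
  apply: NNPP => all_eq0; move/eqP: w_neq0; apply; apply: G_spans => i lt_i.
  by apply/eqP; apply: contraT => wi; exfalso; apply: all_eq0; exists i.
have [wi_lt0|wi_gt0|wi_eq0] := ltrgtP (pairing w G`_i) 0; last by rewrite wi_eq0 eqxx in wi.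
  by exists w; split=> //; exists i.
exists (- w); split=> [r||]; rewrite ?pairingNl ?wX ?we ?oppr0 //.
by exists i; rewrite // pairingNl oppr_lt0.
Qed.

(* Move [z] along a tilt direction [w] until it vanishes on a new generator
   [G`_i]; the minimum ratio test chooses [i]. *)
Lemma tight_separator_step k z (X : 'M[R]_(k, d)) : (k.+1 < d)%N ->
  tight_separator z X -> exists z' (X' : 'M[R]_(k.+1, d)), tight_separator z' X'.
Proof.
move=> lt_kd [[zG ze] free_X X_G zX].
have [w [wX we [i0 lt_i0 wi0]]] := exists_tilt_direction X lt_kd.
pose ratio (i : 'I_(size G)) := pairing z G`_i / - pairing w G`_i.
have [im wim min_im] :=
  arg_minP ratio (wi0 : (fun i : 'I_(size G) => pairing w G`_i < 0) (Ordinal lt_i0)).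
have ratio_ge0 : 0 <= ratio im by rewrite divr_ge0 ?zG // oppr_ge0 (ltW wim).
have z'E x : pairing (z + ratio im *: w) x = pairing z x + ratio im * pairing w x.
  by rewrite pairingDl pairingZl.
rewrite -[k.+1]addn1; exists (z + ratio im *: w), (col_mx X G`_im); split.
- split=> [i lt_i|]; last by rewrite z'E we mulr0 addr0.
  rewrite z'E; have [wi|wi] := lerP 0 (pairing w G`_i).
    by apply: addr_ge0; [exact: zG | exact: mulr_ge0].
  have := min_im (Ordinal lt_i) wi; rewrite /ratio /= ler_pdivlMr ?oppr_gt0 //.
  by rewrite mulrN -subr_ge0 opprK addrC.
- by apply: (row_free_col_mx free_X wX); rewrite lt_eqF.
- move=> r; rewrite -(splitK r); case: (split r) => j /=; first by rewrite rowKu.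
  by rewrite rowKd (ord1 j); exists im => //; apply/rowP => l; rewrite mxE.
- move=> r; rewrite -(splitK r); case: (split r) => j /=.
    by rewrite rowKu z'E zX wX mulr0 addr0.
  rewrite rowKd (ord1 j).
  have -> : row 0 G`_im = G`_im by apply/rowP => l; rewrite mxE.
  by rewrite z'E /ratio invrN mulrN mulNr mulfVK ?lt_eqF // subrr.
Qed.

Lemma exists_tight_separator z : separates z G e ->
  exists z' (X : 'M[R]_(d.-1, d)), tight_separator z' X.
Proof.
move=> sep_z; suff: forall k, (k <= d.-1)%N ->
    exists z' (X : 'M[R]_(k, d)), tight_separator z' X by apply.
elim=> [|k IH] le_k.
  by exists z, 0; split=> //; [rewrite /row_free mxrank0 | case..].
have [z' [X tight]] := IH (ltnW le_k).
by apply: tight_separator_step tight; lia.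
Qed.

End Tilt.

Section IntegerMatrix.
Variables (R : realFieldType) (d : nat).

Definition intmx (M : 'M[int]_d) : 'M[R]_d := map_mx (fun z : int => z%:~R) M.

Lemma intfun_row (M : 'M[int]_d) i : intfun R (row i M) = row i (intmx M).
Proof. exact: map_row. Qed.

Lemma intmx_unitmx (M : 'M[int]_d) : M \in unitmx -> intmx M \in unitmx.
Proof.
rewrite !unitmxE /intmx det_map_mx unitfE intr_eq0 => M_unit.
by apply: contraTneq M_unit => ->; rewrite unitr0.
Qed.

Lemma intmx_invmx (M : 'M[int]_d) : M \in unitmx -> intmx (invmx M) = invmx (intmx M).
Proof.
move=> M_unit; have A_unit := intmx_unitmx M_unit.
have inv_right : intmx M *m intmx (invmx M) = 1%:M.
  by rewrite /intmx -map_mxM mulmxV // map_mx1.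
by rewrite -[LHS](mulKmx A_unit) inv_right mulmx1.
Qed.

Lemma pairing_row_invmx_tr (A : 'M[R]_d) i j : A \in unitmx ->
  pairing (row i A) (row j (invmx A)^T) = (i == j)%:R.
Proof.
move=> A_unit; have := congr1 (fun B : 'M[R]_d => B i j) (mulmxV A_unit).
by rewrite !mxE => <-; apply: eq_bigr => k _; rewrite !mxE.
Qed.

Lemma coord_invmx (y : 'rV[R]_d) (A : 'M[R]_d) j :
  (y *m invmx A) 0 j = pairing y (row j (invmx A)^T).
Proof. by rewrite mxE; apply: eq_bigr => k _; rewrite !mxE. Qed.

End IntegerMatrix.

Section Faces.
Variables (R : realFieldType) (d : nat) (V : seq 'rV[R]_d).
Local Notation P := (conv V).

Lemma is_facet_eq (F F' : 'rV[R]_d -> Prop) :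
  (forall x, F x <-> F' x) -> is_facet P F -> is_facet P F'.
Proof.
move=> FF' [u [u_neq0 [Fu [x0 [X [free_X Fx0 FX]]]]]].
exists u; split=> //; split=> [x|]; first by rewrite -FF'.
by exists x0, X; split=> [||i]; rewrite // -FF'.
Qed.

Lemma full_dimensional_spans v w : full_dimensional P -> P v ->
  (forall i, (i < size V)%N -> pairing w (V`_i - v) = 0) -> w = 0.
Proof.
move=> [x0 [X [free_X Px0 PX]]] Pv wV.
have w_const p : P p -> pairing w p = pairing w v.
  move=> [lam [_ lam_sum1 E]]; rewrite (pairing_convex_comb w E).
  under eq_bigr => i _ do
    (move/eqP: (wV i (ltn_ord i)); rewrite pairingBr subr_eq0 => /eqP ->).
  by rewrite -mulr_suml lam_sum1 mul1r.
have : w *m X^T = 0.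
  apply/rowP => i; rewrite pairing_row_mulmx_tr mxE.
  by have := w_const _ (PX i); rewrite pairingDr w_const //; lra.
by move/eqP; rewrite mulmx_free_eq0 ?row_free_unit ?unitmx_tr -?row_free_unit // => /eqP.
Qed.

Lemma colinear_of_orthogonal (z a : 'rV[R]_d) (X : 'M[R]_(d.-1, d)) :
  (0 < d)%N -> row_free X ->
  (forall r, pairing z (row r X) = 0) -> (forall r, pairing a (row r X) = 0) ->
  a != 0 -> exists c, z = c *: a.
Proof.
move=> d_gt0 free_X zX aX a_neq0.
have in_ker (w : 'rV[R]_d) : (forall r, pairing w (row r X) = 0) -> (w <= kermx X^T)%MS.
  by move=> wX; apply/sub_kermxP/rowP => r; rewrite pairing_row_mulmx_tr mxE wX.
have rank_ker : \rank (kermx X^T) = 1%N.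
  by rewrite mxrank_ker mxrank_tr (eqP free_X); lia.
have ker_a : (kermx X^T <= a)%MS.
  by case: (mxrank_leqif_sup (in_ker _ aX)) => _ <-; rewrite rank_rV a_neq0 rank_ker.
have /submxP [D ->] := submx_trans (in_ker _ zX) ker_a.
by exists (D 0 0); rewrite {1}[D]mx11_scalar mul_scalar_mx.
Qed.

End Faces.

Section DelzantVertex.
Variables (R : realFieldType) (d : nat) (V : seq 'rV[R]_d) (v : 'rV[R]_d).
Variable M : 'M[int]_d.
Local Notation P := (conv V).
Local Notation G := [seq x - v | x <- V].
Local Notation A := (intmx R M).
Hypothesis d_gt0 : (0 < d)%N.
Hypothesis P_full : full_dimensional P.
Hypothesis facets_primitive : forall F, is_facet P F ->
  exists u, primitive u /\ forall x, F x <-> face P (intfun R u) x.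
Hypothesis Pv : P v.
Hypothesis M_unit : M \in unitmx.
Hypothesis M_normals : forall u,
  (facet_normal P u /\ face P (intfun R u) v) <-> exists i, u = row i M.

Lemma nth_translate i : (i < size V)%N -> G`_i = V`_i - v.
Proof. by move=> lt_i; rewrite (nth_map 0). Qed.

Lemma translates_span w : (forall i, (i < size G)%N -> pairing w G`_i = 0) -> w = 0.
Proof.
move=> wG; apply: full_dimensional_spans P_full Pv _ => i lt_i.
by rewrite -nth_translate // wG ?size_map.
Qed.

Lemma face_translate z i : face P z v -> (i < size V)%N ->
  pairing z G`_i = 0 -> face P z V`_i.
Proof.
move=> [_ min_z] lt_i; rewrite nth_translate // pairingBr => /eqP; rewrite subr_eq0.
by move=> /eqP zi; split=> [|x Px]; [exact: conv_nth_lt | rewrite zi min_z].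
Qed.

Lemma face_row_intmx i : face P (row i A) v.
Proof. by rewrite -intfun_row; have [] := (M_normals (row i M)).2 (ex_intro _ i erefl). Qed.

Lemma row_intmx_neq0 i : row i A != 0.
Proof.
apply/eqP => Ai0; have := pairing_row_invmx_tr i i (intmx_unitmx R M_unit).
by rewrite Ai0 pairing0l eqxx => /eqP; rewrite eq_sym oner_eq0.
Qed.

(* The facet cut out by a tight separator passes through [v], so its normal
   is one of the rows of [M]. *)
Lemma tight_separator_normal e z (X : 'M[R]_(d.-1, d)) :
  tight_separator G e z X -> exists i c, z = c *: row i A.
Proof.
move=> [[zG ze] free_X X_G zX].
have face_z : face P z v.
  split=> // x Px; apply: conv_pairing_ge Px _ => k.
  by have := zG k; rewrite size_map nth_translate // pairingBr subr_ge0; apply.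
have face_X r : exists2 l, (l < size V)%N & row r X = V`_l - v /\ face P z V`_l.
  have [l lt_l Xr] := X_G r; rewrite size_map in lt_l; exists l => //.
  by rewrite -nth_translate // -Xr; split=> //; apply: face_translate; rewrite // -?Xr.
have facet_z : is_facet P (face P z).
  exists z; split; first by apply: contraTneq ze => ->; rewrite pairing0l ltxx.
  split=> //; exists v, X; split=> // r.
  by have [l _ [-> ?]] := face_X r; rewrite addrC subrK.
have [u [prim_u Fu]] := facets_primitive facet_z.
have [i uE] := (M_normals u).1 (conj (conj prim_u (is_facet_eq Fu facet_z)) ((Fu v).1 face_z)).
subst u.
have AiX r : pairing (row i A) (row r X) = 0.
  have [l lt_l [-> /Fu [_ min_l]]] := face_X r; have [_ min_v] := (Fu v).1 face_z.
  rewrite pairingBr -intfun_row; apply/eqP; rewrite subr_eq0 eq_le.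
  by rewrite (min_l v Pv) (min_v _ (conv_nth_lt lt_l)).
exact/(ex_intro _ i)/(colinear_of_orthogonal d_gt0 free_X zX AiX (row_intmx_neq0 i)).
Qed.

(* If [y] is minimized at [v] but had a negative coordinate on the edge [e],
   Farkas would produce a facet through [v] with normal [row j A], and [row j A]
   would then vanish on [P - v]. *)
Lemma normal_cone_coord_ge0 y : face P y v -> forall j, 0 <= (y *m invmx A) 0 j.
Proof.
move=> [_ min_y] j; rewrite leNgt; apply/negP; rewrite coord_invmx.
set e := row j (invmx A)^T => ye.
have yG i : (i < size G)%N -> 0 <= pairing y G`_i.
  rewrite size_map => lt_i.
  by rewrite nth_translate // pairingBr subr_ge0 (min_y _ (conv_nth_lt lt_i)).
have [z0 sep] : exists z0, separates z0 G e.
  apply: farkas => -[mu [mu_ge0 eE]]; move: ye; rewrite eE pairing_sumr ltNge.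
  by rewrite sumr_ge0 // => i _; rewrite pairingZr mulr_ge0 ?yG.
have [z [X tight]] := exists_tight_separator translates_span sep.
have [i [c zE]] := tight_separator_normal tight.
have [[zG ze] _ _ _] := tight; move: ze; rewrite zE pairingZl.
rewrite pairing_row_invmx_tr ?intmx_unitmx //.
have [_|_] := eqVneq i j; last by rewrite mulr0 ltxx.
rewrite mulr1 => c_lt0; move/eqP: (row_intmx_neq0 i); apply.
apply: translates_span => l lt_l.
have [_ min_v] := face_row_intmx i; apply/eqP; rewrite eq_le.
have := zG l lt_l; rewrite zE pairingZl (nmulr_rge0 _ c_lt0) => -> /=.
rewrite size_map in lt_l.
by rewrite nth_translate // pairingBr subr_ge0 (min_v _ (conv_nth_lt lt_l)).
Qed.

Lemma int_coord_ge0 (u : 'rV[int]_d) :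
  face P (intfun R u) v -> forall j, 0 <= (u *m invmx M) 0 j.
Proof.
move=> /normal_cone_coord_ge0 coord_ge0 j; have := coord_ge0 j.
by rewrite -(intmx_invmx R M_unit) /intfun /intmx -map_mxM mxE ler0z.
Qed.

End DelzantVertex.

Section WidthComparison.
Variables (R : realFieldType) (d : nat).

Lemma width_le_of_sandwich (P : 'rV[R]_d -> Prop) v (n u : 'rV[R]_d) wn wu :
  P v -> (forall x, P x -> 0 <= pairing n (x - v) <= pairing u (x - v)) ->
  is_width P u wu -> is_width P n wn -> wn <= wu.
Proof.
move=> Pv sandwich [_ le_wu] [[x [y [Px Py <-]]] _].
have := sandwich x Px; have := sandwich y Py.
have := le_wu x v Px Pv; have := le_wu y v Py Pv; rewrite !pairingBr.
move=> /ler_normlP [_ ?] /ler_normlP [_ ?] /andP [? ?] /andP [? ?].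
by rewrite ler_norml; apply/andP; split; lra.
Qed.

Lemma pairing_row_le_mulmx m (a : 'rV[R]_m) (A : 'M[R]_(m, d)) x j :
  (forall i, 0 <= a 0 i) -> (forall i, 0 <= pairing (row i A) x) -> 1 <= a 0 j ->
  pairing (row j A) x <= pairing (a *m A) x.
Proof.
move=> a_ge0 Ax_ge0 aj_ge1; rewrite pairing_mulmx (bigD1 j) //= -[leLHS]addr0.
apply: lerD; first by rewrite -[leLHS]mul1r ler_wpM2r.
by apply: sumr_ge0 => i _; rewrite mulr_ge0.
Qed.

End WidthComparison.

Lemma exists_coord_ge1 d (b : 'rV[int]_d) :
  b != 0 -> (forall j, 0 <= b 0 j) -> exists j, 1 <= b 0 j.
Proof.
move=> b_neq0 b_ge0; have [j bj] : exists j, b 0 j != 0.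
  apply/existsP; apply: contraNT b_neq0 => /existsPn b0.
  by apply/eqP/rowP => j; rewrite mxE; apply/eqP; move: (b0 j); rewrite negbK.
by exists j; have := b_ge0 j; move: bj; lia.
Qed.

Section Delzant.
Variables (R : realFieldType) (d : nat) (V : seq 'rV[R]_d).
Local Notation P := (conv V).
Hypothesis d_gt0 : (0 < d)%N.
Hypothesis P_delzant : delzant P.

Lemma delzant_point : exists x, P x.
Proof. by have [[x [X [_ Px _]]] _ _] := P_delzant; exists x. Qed.

Lemma exists_facet_normal_le_width (u : 'rV[int]_d) w :
  u != 0 -> is_width P (intfun R u) w ->
  exists u', facet_normal P u' /\ forall w', is_width P (intfun R u') w' -> w' <= w.
Proof.
move=> u_neq0 width_u; have [P_full facets_primitive vertex_normals] := P_delzant.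
have [x0 Px0] := delzant_point.
have [k [vertex_k face_k]] := exists_vertex_face (intfun R u) Px0.
set v := V`_k in vertex_k face_k.
have [M [M_unit M_normals]] := vertex_normals _ vertex_k.
set b := u *m invmx M.
have b_ge0 := int_coord_ge0 d_gt0 P_full facets_primitive face_k.1 M_unit M_normals face_k.
have uE : intfun R u = intfun R b *m intmx R M.
  by rewrite /intfun /intmx -map_mxM /b mulmxKV.
have [j bj] : exists j, 1 <= b 0 j.
  apply: exists_coord_ge1 => //; apply: contra_neq u_neq0 => b0.
  by rewrite -(mulmxKV M_unit u) -/b b0 mul0mx.
exists (row j M); split; first by have [] := (M_normals (row j M)).2 (ex_intro _ j erefl).
move=> w' width_j; apply: width_le_of_sandwich face_k.1 _ width_u width_j => x Px.
have face_row i := face_row_intmx M_normals i.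
have row_ge0 i : 0 <= pairing (row i (intmx R M)) (x - v).
  by rewrite pairingBr subr_ge0; apply: (face_row i).2.
rewrite intfun_row row_ge0 uE /=; apply: pairing_row_le_mulmx => // [i|].
  by rewrite mxE ler0z.
by rewrite mxE ler1z.
Qed.

Lemma facet_normals_finite : exists L : seq 'rV[int]_d,
  forall u, u \in L <-> facet_normal P u.
Proof.
have [_ _ vertex_normals] := P_delzant.
have: exists L : seq 'rV[int]_d, (forall u, u \in L -> facet_normal P u) /\
    forall k, (k < size V)%N -> is_vertex P V`_k ->
      forall u, facet_normal P u /\ face P (intfun R u) V`_k -> u \in L.
  elim: (size V) => [|n [L [L_normals L_vertices]]]; first by exists [::].
  have [vertex_n|not_vertex] := classic (is_vertex P V`_n); last first.
    exists L; split=> // k; rewrite ltnS leq_eqVlt => /orP [/eqP -> //|]; exact: L_vertices.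
  have [M [_ M_normals]] := vertex_normals _ vertex_n.
  exists (L ++ [seq row i M | i <- enum 'I_d]); split=> [u|k].
    rewrite mem_cat => /orP [/L_normals //|/mapP [i _ ->]].
    by have [] := (M_normals (row i M)).2 (ex_intro _ i erefl).
  rewrite ltnS leq_eqVlt => /orP [/eqP -> _ u /M_normals [i ->]|lt_k vertex_k u fu];
    rewrite mem_cat; first by apply/orP; right; apply: map_f; rewrite mem_enum.
  by rewrite (L_vertices k lt_k vertex_k u fu).
move=> [L [L_normals L_vertices]]; exists L => u; split=> [/L_normals //|fu].
have [x0 Px0] := delzant_point.
have [k [vertex_k face_k]] := exists_vertex_face (intfun R u) Px0.
exact: L_vertices (ltn_ord k) vertex_k u (conj fu face_k).
Qed.

Lemma exists_facet_normal : exists u, facet_normal P u.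
Proof.
have [_ _ vertex_normals] := P_delzant; have [x0 Px0] := delzant_point.
have [k [vertex_k _]] := exists_vertex_face 0 Px0.
have [M [_ M_normals]] := vertex_normals _ vertex_k.
exists (row (Ordinal d_gt0) M).
by have [] := (M_normals (row (Ordinal d_gt0) M)).2 (ex_intro _ _ erefl).
Qed.

End Delzant.

Lemma exists_min_width (R : realFieldType) d (V : seq 'rV[R]_d) (L : seq 'rV[int]_d) x :
  conv V x -> L != [::] ->
  exists2 u, u \in L & exists w, is_width (conv V) (intfun R u) w /\
    forall u', u' \in L -> forall w', is_width (conv V) (intfun R u') w' -> w <= w'.
Proof.
move=> Px; elim: L => [//|a L IH] _.
have [wa width_a] := exists_width (intfun R a) Px.
have [->|L_neq0] := eqVneq L [::].
  exists a; rewrite ?mem_head //; exists wa; split=> // u; rewrite mem_seq1 => /eqP ->.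
  by move=> w /(is_width_unique width_a) ->.
have [u uL [w [width_u min_u]]] := IH L_neq0.
have [le_a|lt_u] := lerP wa w.
  exists a; rewrite ?mem_head //; exists wa; split=> // u'.
  rewrite in_cons => /orP [/eqP ->|u'L] w' width_u'.
    by rewrite (is_width_unique width_a width_u').
  exact: le_trans le_a (min_u u' u'L w' width_u').
exists u; first by rewrite in_cons uL orbT.
exists w; split=> // u'; rewrite in_cons => /orP [/eqP ->|u'L] w' width_u'.
  by rewrite -(is_width_unique width_a width_u') ltW.
exact: min_u u' u'L w' width_u'.
Qed.

Unset Implicit Arguments.

Theorem lemma3p9 (R : realFieldType) (d : nat) (V : seq 'rV[R]_d) :
  (0 < d)%N -> delzant (conv V) ->
  exists w : R, is_lattice_width (conv V) w /\ is_facet_width (conv V) w.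
Proof.
move=> d_gt0 P_delzant.
have [x0 Px0] := delzant_point P_delzant.
have [L L_normals] := facet_normals_finite P_delzant.
have [u0 /L_normals u0L] := exists_facet_normal d_gt0 P_delzant.
have [|u uL [w [width_u min_u]]] := exists_min_width (L := L) Px0.
  by apply: contraTneq u0L => ->.
have [[u_neq0 _] _] : facet_normal (conv V) u by apply/L_normals.
exists w; split; split; first by exists u.
- move=> u' w' u'_neq0 width_u'.
  have [u'' [/L_normals u''L le_w']] :=
    exists_facet_normal_le_width d_gt0 P_delzant u'_neq0 width_u'.
  have [w'' width_u''] := exists_width (intfun R u'') Px0.
  exact: le_trans (min_u _ u''L _ width_u'') (le_w' _ width_u'').
- by exists u; split=> //; apply/L_normals.
- by move=> u' w' /L_normals u'L; apply: min_u u'L w'.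
Qed.
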